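(* Let $b,N,K,\Delta,R,L_0,L$ be positive integers with $2\le\Delta\le R-K<b-K-2$ and $\log_2N<K\le L_0\le L<b-\log_2(b+10)$. All configurations below are configurations over a fixed set of $N$ levels as in the context (with $z<2^b$). Then: (1) If a configuration consists of exactly one significand, in level $\lambda$, then $G=L_0+1-b-\lambda$ satisfies $2^K\le A(G)<2^b$. (2) Let $C$ be a configuration and $C'$ the configuration obtained by adding one significand to level $\ell$; write $SS'_\ell$, $A'_\ell(\cdot)$, $A'(\cdot)$ for the quantities of $C'$ and $A(\cdot)$ for those of $C$. Let $G$ be an integer with $A(G)<2^b$. (a) If $A'_\ell(G)\ge 2^b$, then $G_\downarrow=R-\lfloor\log_2 SS'_\ell\rfloor-\ell$ satisfies $2^K\le A'(G_\downarrow)<2^b$. (b) If $A'_\ell(G)<2^b$ but $A'(G)\ge 2^b$, then $G_\downarrow=G-\Delta$ satisfies $2^K\le A'(G_\downarrow)<2^b$. (3) If $C'$ is obtained from $C$ by removing significands, then $A'(G)\le A(G)$ for every integer $G$; in particular $A(G)<2^b$ implies $A'(G)<2^b$. (4) For any nonempty configuration with largest nonempty level $\lambda$, let $H_r=\lfloor SS_{\lambda-r}/2^b\rfloor$ for $r=0,\dots,b$, $E=\sum_{r=0}^b\lfloor H_r2^{-r+1}\rfloor$, $t=\lfloor\log_2\max\{E,1\}\rfloor$, and $G_\uparrow=L+1-b-t-\lambda$. Then $2^L\le A(G_\uparrow)<2^b$.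
   Context: Fix an integer $b\ge 2$. There is a set $\mathcal L$ of $N$ levels, which are consecutive integers. Each level $\ell$ holds a finite (possibly empty) multiset of normalized significands, each an integer in $[2^{b-1},2^b)$. Let $z$ be the total number of stored significands over all levels; assume $z<2^b$. For each level, $SS_\ell$ is the sum of its significands (so $SS_\ell=0$ iff the level is empty); set $SS_\ell=0$ for integers $\ell\notin\mathcal L$. The level weight is $W_\ell=SS_\ell2^\ell$. For an integer global shift $G$, $A_\ell(G)=\lfloor W_\ell2^G\rfloor+1$ if $SS_\ell>0$ and $A_\ell(G)=0$ if $SS_\ell=0$; $A(G)=\sum_\ell A_\ell(G)$ and $M(G)=\sum_\ell W_\ell2^G$. The configuration is nonempty if $z\ge1$. (In the paper's terminology a shift $G$ is safe if $A(G)<2^b$, good if $A(G)\ge2^K$, strongly good if $A(G)\ge 2^L$.) *)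

From mathcomp Require Import all_boot all_order all_algebra.
From Stdlib Require Rdefinitions Rpower Raxioms.
Set Implicit Arguments. Unset Strict Implicit. Unset Printing Implicit Defensive.
Import Order.TTheory GRing.Theory Num.Theory.
Local Open Scope ring_scope.

Definition log2R (x : Rdefinitions.R) : Rdefinitions.R :=
  Rdefinitions.Rdiv (Rpower.ln x) (Rpower.ln (Rdefinitions.IZR (BinNums.Zpos (BinNums.xO BinNums.xH)))).

Definition in_levels (m0 : int) (N : nat) (l : int) : bool :=
  (m0 <= l) && (l < m0 + N%:Z).

(* A configuration assigns to each integer level a multiset (seq) of significands. *)
Definition config := int -> seq nat.

Definition zcount (m0 : int) (N : nat) (C : config) : nat :=
  (\sum_(i < N) size (C (m0 + i%:Z)%R))%N.

Definition valid_config (b : nat) (m0 : int) (N : nat) (C : config) : Prop :=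
  [/\ (forall l, ~~ in_levels m0 N l -> C l = [::]),
      (forall l s, s \in C l -> (2 ^ b.-1 <= s < 2 ^ b)%N)
    & (zcount m0 N C < 2 ^ b)%N].

Definition SS (C : config) (l : int) : nat := (\sum_(s <- C l) s)%N.

Definition A_lvl (C : config) (l G : int) : int :=
  if SS C l == 0%N then 0
  else Num.floor (((SS C l)%:R * (2%:R : rat) ^ l) * (2%:R : rat) ^ G) + 1.

Definition A_tot (m0 : int) (N : nat) (C : config) (G : int) : int :=
  \sum_(i < N) A_lvl C (m0 + i%:Z) G.

Definition add_sig (C C' : config) (l : int) (s : nat) : Prop :=
  C' l = s :: C l /\ forall l', l' != l -> C' l' = C l'.

Definition removed_from (C C' : config) : Prop :=
  forall l x, (count_mem x (C' l) <= count_mem x (C l))%N.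

Definition Hr (b : nat) (C : config) (lam : int) (r : nat) : nat :=
  (SS C (lam - r%:Z)%R %/ 2 ^ b)%N.
Definition Eval (b : nat) (C : config) (lam : int) : int :=
  \sum_(r < b.+1) Num.floor ((Hr b C lam r)%:R * (2%:R : rat) ^ (1 - r%:Z)).

(* A(G) lies between M(G) = sum_l W_l 2^G and M(G) + N, and M scales exactly:
   M(G + d) = M(G) 2^d.  Each prescribed shift makes one quantity pin M(G) to a
   window of a few powers of two: the lone significand in (1), the overflowing
   level SS'_l in (2a), the previous total A(G) < 2^b (together with the new
   overflow A'(G) >= 2^b) in (2b), and in (4) the integer E, which approximates
   the mass of the top b+1 levels to within b+5 units, while all lower levels
   together weigh less than one unit since z < 2^b.  The hypotheses N < 2^K and
   (b+10) 2^L < 2^b absorb the rounding; (3) is monotonicity of SS_l. *)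

From mathcomp Require Import all_boot all_order all_algebra.
From Stdlib Require Rdefinitions Rpower Raxioms.
From Stdlib Require RIneq Rfunctions Lra.
From mathcomp Require Import lra zify.
Set Implicit Arguments. Unset Strict Implicit. Unset Printing Implicit Defensive.
Import Order.TTheory GRing.Theory Num.Theory.
Local Open Scope ring_scope.

Definition pow2 (z : int) : rat := (2%:R : rat) ^ z.

Lemma pow2D a c : pow2 (a + c) = pow2 a * pow2 c.
Proof. by rewrite /pow2 expfzDr. Qed.

Lemma pow2_gt0 a : 0 < pow2 a.
Proof. by rewrite /pow2 exprz_gt0. Qed.

Lemma pow2_nat (n : nat) : pow2 n = (2 ^ n)%N%:R.
Proof. by rewrite /pow2 -exprnP natrX. Qed.

Lemma ler_pow2 a c : a <= c -> pow2 a <= pow2 c.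
Proof.
move=> le_ac; have [k ->] : exists k : nat, c = a + k%:Z by exists `|c - a|%N; lia.
by rewrite pow2D ler_peMr ?(ltW (pow2_gt0 _)) // pow2_nat ler1n expn_gt0.
Qed.

Lemma pow2S a : pow2 (a + 1) = 2 * pow2 a.
Proof. by rewrite pow2D mulrC. Qed.

Lemma ltr_nat_pow2 (n k : nat) : (n < 2 ^ k)%N -> n%:R + 1 <= pow2 k.
Proof. by rewrite pow2_nat natr1 ler_nat. Qed.

Lemma ltz_pow2 (x : int) (n : nat) : (x < 2%:Z ^+ n) = (x%:~R + 1 <= pow2 n).
Proof. by rewrite -lezD1 -(ler_int rat) intrD rmorphXn /= pow2_nat natrX. Qed.

Lemma lez_pow2 (x : int) (n : nat) : (2%:Z ^+ n <= x) = (pow2 n <= x%:~R).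
Proof. by rewrite -(ler_int rat) rmorphXn /= pow2_nat natrX. Qed.

Definition W_lvl (C : config) (l G : int) : rat := (SS C l)%:R * pow2 (l + G).

Definition M_tot (m0 : int) (N : nat) (C : config) (G : int) : rat :=
  \sum_(i < N) W_lvl C (m0 + i%:Z) G.

Section LevelWeights.
Variable C : config.

Lemma W_lvl_ge0 l G : 0 <= W_lvl C l G.
Proof. by rewrite /W_lvl mulr_ge0 // ltW // pow2_gt0. Qed.

Lemma W_lvl_shift (l G d : int) : W_lvl C l (G + d) = W_lvl C l G * pow2 d.
Proof. by rewrite /W_lvl addrA (pow2D (l + G)) mulrA. Qed.

Lemma W_lvl_ge l (a : nat) (c : int) :
  (2 ^ a <= SS C l)%N -> pow2 c <= W_lvl C l (c - a%:Z - l).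
Proof.
move=> SS_ge; rewrite /W_lvl (_ : l + (c - a%:Z - l) = c - a%:Z); last by lia.
have -> : pow2 c = pow2 (c - a%:Z) * pow2 a%:Z by rewrite -pow2D subrK.
by rewrite [leRHS]mulrC ler_wpM2l ?(ltW (pow2_gt0 _)) // pow2_nat ler_nat.
Qed.

Lemma W_lvl_lt l (a : nat) (c : int) :
  (SS C l < 2 ^ a.+1)%N -> W_lvl C l (c - a%:Z - l) < pow2 (c + 1).
Proof.
move=> SS_lt; rewrite /W_lvl (_ : l + (c - a%:Z - l) = c - a%:Z); last by lia.
have -> : pow2 (c + 1) = pow2 (c - a%:Z) * pow2 a.+1%:Z by rewrite -pow2D; congr pow2; lia.
by rewrite [ltLHS]mulrC ltr_pM2l ?pow2_gt0 // pow2_nat ltr_nat.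
Qed.

Lemma A_lvlE l G :
  A_lvl C l G = if SS C l == 0%N then 0 else Num.floor (W_lvl C l G) + 1.
Proof. by rewrite /A_lvl /W_lvl /pow2 expfzDr ?mulrA. Qed.

Lemma A_lvl_ge0 l G : 0 <= A_lvl C l G.
Proof. by rewrite A_lvlE; case: ifP => // _; rewrite ltW // ltzD1 floor_ge0 W_lvl_ge0. Qed.

Lemma W_le_A_lvl l G : W_lvl C l G <= (A_lvl C l G)%:~R.
Proof.
rewrite A_lvlE; case: eqP => [SS0 | _]; first by rewrite /W_lvl SS0 mul0r.
by have /andP [_ /ltW] := floor_itv (W_lvl C l G).
Qed.

Lemma A_lvl_le_W l G : (A_lvl C l G)%:~R <= W_lvl C l G + 1.
Proof.
rewrite A_lvlE; case: ifP => _; first by rewrite ler_wpDl ?W_lvl_ge0.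
by have /andP [floor_le _] := floor_itv (W_lvl C l G); rewrite intrD lerD2r.
Qed.

End LevelWeights.

Lemma sum_levels_window (V : nmodType) (m0 : int) (N : nat) (lam : int) (n : nat)
    (F : int -> V) :
  (forall l, F l != 0 -> in_levels m0 N l) ->
  (forall l, F l != 0 -> lam - n%:Z < l <= lam) ->
  \sum_(i < N) F (m0 + i%:Z) = \sum_(r < n) F (lam - r%:Z).
Proof.
move=> F_lev F_win.
rewrite -(big_mkord xpredT (fun i : nat => F (m0 + i%:Z))).
rewrite -(big_mkord xpredT (fun r : nat => F (lam - r%:Z))).
rewrite /index_iota !subn0 -(big_map (fun i : nat => m0 + i%:Z) xpredT F).
rewrite -(big_map (fun r : nat => lam - r%:Z) xpredT F).
apply: perm_big_supp; apply: uniq_perm.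
- by rewrite filter_uniq // map_inj_uniq ?iota_uniq // => i j /addrI [].
- by rewrite filter_uniq // map_inj_uniq ?iota_uniq // => i j /addrI /oppr_inj [].
move=> l; rewrite !mem_filter; case: (boolP (F l != 0)) => //= Fl.
have /andP [l_ge l_lt] := F_lev l Fl; have /andP [l_gt l_le] := F_win l Fl.
apply/mapP/mapP => _.
- by exists `|lam - l|%N; rewrite ?mem_iota; lia.
- by exists `|l - m0|%N; rewrite ?mem_iota; lia.
Qed.

Lemma sum_levels1 (V : nmodType) (m0 : int) (N : nat) (l : int) (F : int -> V) :
  in_levels m0 N l -> (forall l', l' != l -> F l' = 0) ->
  \sum_(i < N) F (m0 + i%:Z) = F l.
Proof.
move=> l_lev F0; rewrite (@sum_levels_window _ _ _ l 1) ?big_ord1 ?subr0 // => l' Fl'.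
  by case: (eqVneq l' l) => [-> // | /F0 Fl'0]; rewrite Fl'0 eqxx in Fl'.
by case: (eqVneq l' l) => [-> | /F0 Fl'0]; [lia | rewrite Fl'0 eqxx in Fl'].
Qed.

Section LevelSums.
Variables (m0 : int) (N : nat) (C : config).

Lemma M_tot_shift (G d : int) : M_tot m0 N C (G + d) = M_tot m0 N C G * pow2 d.
Proof. by rewrite /M_tot mulr_suml; apply: eq_bigr => i _; rewrite W_lvl_shift. Qed.

Lemma M_le_A_tot G : M_tot m0 N C G <= (A_tot m0 N C G)%:~R.
Proof. by rewrite /A_tot rmorph_sum; apply: ler_sum => i _; apply: W_le_A_lvl. Qed.

Lemma A_tot_le_M G : (A_tot m0 N C G)%:~R <= M_tot m0 N C G + N%:R.
Proof.
rewrite /A_tot rmorph_sum /M_tot -[in N%:R](card_ord N) -sumr_const -big_split.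
by apply: ler_sum => i _; apply: A_lvl_le_W.
Qed.

Lemma A_lvl_le_tot l G : in_levels m0 N l -> A_lvl C l G <= A_tot m0 N C G.
Proof.
move=> l_lev.
have -> : A_lvl C l G = \sum_(i < N) (if m0 + i%:Z == l then A_lvl C (m0 + i%:Z) G else 0).
  by rewrite (@sum_levels1 _ m0 N l (fun l' => if l' == l then A_lvl C l' G else 0))
    ?eqxx // => l' /negbTE ->.
by apply: ler_sum => i _; case: ifP => // _; apply: A_lvl_ge0.
Qed.

End LevelSums.

Section Validity.
Variables (b : nat) (m0 : int) (N : nat) (C : config).
Hypothesis C_valid : valid_config b m0 N C.

Lemma valid_level l : C l != [::] -> in_levels m0 N l.
Proof. by case: C_valid => out _ _; apply: contraR => /out ->. Qed.

Lemma valid_SS_ge l : C l != [::] -> (2 ^ b.-1 <= SS C l)%N.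
Proof.
case: C_valid => _ sig _; rewrite /SS; case E: (C l) => [|s t] // _.
have /andP [s_ge _] := sig l s ltac:(by rewrite E mem_head).
by rewrite big_cons (leq_trans s_ge) ?leq_addr.
Qed.

Lemma valid_SS_eq0 l : (SS C l == 0%N) = (C l == [::]).
Proof.
case: (eqVneq (C l) [::]) => [Cl0 | /valid_SS_ge SS_ge]; first by rewrite /SS Cl0 big_nil.
by apply/negbTE; rewrite -lt0n (leq_trans _ SS_ge) ?expn_gt0.
Qed.

Lemma valid_SS_le l : (SS C l <= size (C l) * 2 ^ b)%N.
Proof.
case: C_valid => _ sig _; rewrite /SS; move: (sig l).
elim: (C l) => [|s t IH] t_sig; first by rewrite big_nil.
rewrite big_cons mulSn leq_add ?IH //; first by have /andP [_ /ltnW] := t_sig s (mem_head _ _).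
by move=> x x_t; apply: t_sig; rewrite inE x_t orbT.
Qed.

Lemma valid_sum_SS_lt : (\sum_(i < N) SS C (m0 + i%:Z) < 2 ^ (2 * b))%N.
Proof.
case: C_valid => _ _; rewrite /zcount mul2n -addnn expnD => z_lt.
apply: (@leq_ltn_trans (zcount m0 N C * 2 ^ b)); last by rewrite ltn_pmul2r ?expn_gt0.
by rewrite /zcount big_distrl /=; apply: leq_sum => i _; apply: valid_SS_le.
Qed.

End Validity.

Lemma leq_sum_submultiset (s s' : seq nat) :
  (forall x, count_mem x s' <= count_mem x s)%N -> (\sum_(x <- s') x <= \sum_(x <- s) x)%N.
Proof.
elim: s' s => [|a s' IH] s sub; first by rewrite big_nil.
have a_s : a \in s by rewrite -has_pred1 has_count (leq_trans _ (sub a)) //= eqxx.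
rewrite big_cons (perm_big _ (perm_to_rem a_s)) big_cons leq_add2l IH // => x.
by move: (sub x); rewrite (permP (perm_to_rem a_s)) /= leq_add2l.
Qed.

Lemma removed_A_tot_le m0 N C C' G :
  removed_from C C' -> A_tot m0 N C' G <= A_tot m0 N C G.
Proof.
move=> rem; apply: ler_sum => i _; rewrite !A_lvlE.
have SS_le : (SS C' (m0 + i%:Z) <= SS C (m0 + i%:Z))%N by apply: leq_sum_submultiset.
case: eqP => [_ | /eqP SS'0]; first by have := A_lvl_ge0 C (m0 + i%:Z) G; rewrite A_lvlE.
rewrite ifF; last by apply/negbTE; rewrite -lt0n (leq_trans _ SS_le) // lt0n.
by rewrite lerD2r le_floor // ler_wpM2r ?ler_nat // ltW // pow2_gt0.
Qed.

Lemma initial_shift_good_safe b N K L0 m0 C lam s :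
  (N < 2 ^ K)%N -> (K <= L0)%N -> (L0 + 2 <= b)%N ->
  valid_config b m0 N C -> C lam = [:: s] -> (forall l, l != lam -> C l = [::]) ->
  2%:Z ^+ K <= A_tot m0 N C (L0%:Z + 1 - b%:Z - lam) < 2%:Z ^+ b.
Proof.
move=> N_lt K_le b_ge C_valid C_lam C_off.
have lam_lev : in_levels m0 N lam by apply: (valid_level C_valid); rewrite C_lam.
have SS_ge : (2 ^ b.-1 <= SS C lam)%N by apply: (valid_SS_ge C_valid); rewrite C_lam.
have SS_lt : (SS C lam < 2 ^ b.-1.+1)%N.
  case: C_valid => _ sig _; rewrite prednK; last by lia.
  by rewrite /SS C_lam big_seq1; have /andP [] := sig lam s ltac:(by rewrite C_lam mem_head).
have -> : L0%:Z + 1 - b%:Z - lam = L0%:Z - b.-1%:Z - lam by lia.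
have W_ge := W_lvl_ge L0%:Z SS_ge; have W_lt := W_lvl_lt L0%:Z SS_lt.
have M_eq : M_tot m0 N C (L0%:Z - b.-1%:Z - lam) = W_lvl C lam (L0%:Z - b.-1%:Z - lam).
  rewrite /M_tot (sum_levels1 (F := fun l => W_lvl C l _) lam_lev) // => l /C_off Cl.
  by rewrite /W_lvl /SS Cl big_nil mul0r.
have K_L0 : pow2 K <= pow2 L0 by rewrite ler_pow2 // lez_nat.
have L0_b : 2 * pow2 (L0%:Z + 1) <= pow2 b by rewrite -pow2S ler_pow2 //; lia.
have A_lvl_le := A_lvl_le_tot C (L0%:Z - b.-1%:Z - lam) lam_lev.
rewrite lez_pow2 ltz_pow2 -(ler_int rat) in A_lvl_le *.
have W_le_A := W_le_A_lvl C lam (L0%:Z - b.-1%:Z - lam).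
have A_le_M := A_tot_le_M m0 N C (L0%:Z - b.-1%:Z - lam).
have N_le := ltr_nat_pow2 N_lt; rewrite M_eq in A_le_M; apply/andP; split; lra.
Qed.

Lemma M_tot_add_sig_le b m0 N C C' l s G :
  valid_config b m0 N C' -> add_sig C C' l s ->
  M_tot m0 N C' G <= M_tot m0 N C G + W_lvl C' l G.
Proof.
move=> C'_valid [C'_l C'_off].
have l_lev : in_levels m0 N l by apply: (valid_level C'_valid); rewrite C'_l.
have SS'_l : SS C' l = (s + SS C l)%N by rewrite /SS C'_l big_cons.
pose D l' : rat := if l' == l then s%:R * pow2 (l + G) else 0.
have -> : M_tot m0 N C' G = M_tot m0 N C G + \sum_(i < N) D (m0 + i%:Z).
  rewrite /M_tot -big_split; apply: eq_bigr => i _; rewrite /D.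
  case: eqP => [-> | /eqP l'_ne] /=; last by rewrite addr0 /W_lvl /SS C'_off.
  by rewrite /W_lvl SS'_l natrD mulrDl addrC.
rewrite lerD2l (sum_levels1 (F := D) l_lev) => [|l' /negbTE l'_ne]; last by rewrite /D l'_ne.
by rewrite /D eqxx /W_lvl ler_wpM2r ?ler_nat ?SS'_l ?leq_addr // ltW ?pow2_gt0.
Qed.

Lemma overflow_level_shift_good_safe b N K R m0 C C' l s G :
  (N < 2 ^ K)%N -> (K <= R)%N -> (R + 3 <= b)%N ->
  valid_config b m0 N C' -> add_sig C C' l s ->
  A_tot m0 N C G < 2%:Z ^+ b -> 2%:Z ^+ b <= A_lvl C' l G ->
  2%:Z ^+ K <= A_tot m0 N C' (R%:Z - (trunc_log 2 (SS C' l))%:Z - l) < 2%:Z ^+ b.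
Proof.
move=> N_lt K_le b_ge C'_valid C_add A_lt A'_l_ge.
have l_lev : in_levels m0 N l by apply: (valid_level C'_valid); rewrite C_add.1.
have SS'_gt0 : (0 < SS C' l)%N.
  by rewrite lt0n (valid_SS_eq0 C'_valid) C_add.1.
have /andP [t_le t_lt] := trunc_log_bounds (isT : (1 < 2)%N) SS'_gt0.
set Gd := R%:Z - _ - l.
have W_ge : pow2 R <= W_lvl C' l Gd := W_lvl_ge R%:Z t_le.
have W_lt : W_lvl C' l Gd < pow2 (R%:Z + 1) := W_lvl_lt R%:Z t_lt.
(* M(G) <= A(G) - 1 <= W'_l(G): the old levels weigh no more than the overflowing one. *)
have M'_le : M_tot m0 N C' G <= 2 * W_lvl C' l G.
  have := M_tot_add_sig_le G C'_valid C_add; have := M_le_A_tot m0 N C G.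
  have := A_lvl_le_W C' l G; rewrite ltz_pow2 lez_pow2 in A_lt A'_l_ge; lra.
have M'_Gd : M_tot m0 N C' Gd <= 2 * W_lvl C' l Gd.
  rewrite -(subrK G Gd) addrC M_tot_shift W_lvl_shift mulrA.
  by rewrite ler_wpM2r // ltW ?pow2_gt0.
have A'_l_le := A_lvl_le_tot C' Gd l_lev.
have W_le_A := W_le_A_lvl C' l Gd; have A_le_M := A_tot_le_M m0 N C' Gd.
have N_le := ltr_nat_pow2 N_lt.
have K_R : pow2 K <= pow2 R by rewrite ler_pow2 // lez_nat.
have R_b : 4 * pow2 (R%:Z + 1) <= pow2 b.
  by rewrite (_ : 4 = pow2 2) // -pow2D ler_pow2 //; lia.
have R1 : pow2 (R%:Z + 1) = 2 * pow2 R by rewrite pow2S.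
rewrite lez_pow2 ltz_pow2 -(ler_int rat) in A'_l_le *; apply/andP; split; lra.
Qed.

Lemma overflow_total_shift_good_safe b N K R Delta m0 C C' l s G :
  (N < 2 ^ K)%N -> (2 <= Delta)%N -> (K + Delta <= R)%N -> (R + 3 <= b)%N ->
  valid_config b m0 N C' -> add_sig C C' l s ->
  A_tot m0 N C G < 2%:Z ^+ b -> A_lvl C' l G < 2%:Z ^+ b ->
  2%:Z ^+ b <= A_tot m0 N C' G ->
  2%:Z ^+ K <= A_tot m0 N C' (G - Delta%:Z) < 2%:Z ^+ b.
Proof.
move=> N_lt Delta_ge R_ge b_ge C'_valid C_add A_lt A'_l_lt A'_ge.
have N_le := ltr_nat_pow2 N_lt.
have M'_le : M_tot m0 N C' G <= 2 * pow2 b.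
  have := M_tot_add_sig_le G C'_valid C_add; have := M_le_A_tot m0 N C G.
  have := W_le_A_lvl C' l G; rewrite !ltz_pow2 in A_lt A'_l_lt; lra.
have M'_ge : pow2 b - pow2 K <= M_tot m0 N C' G.
  by have := A_tot_le_M m0 N C' G; rewrite lez_pow2 in A'_ge; lra.
have scale x y : x <= y -> x * pow2 (- Delta%:Z) <= y * pow2 (- Delta%:Z).
  by move=> /ler_wpM2r; apply; rewrite ltW ?pow2_gt0.
have b_Delta : pow2 b * pow2 (- Delta%:Z) = pow2 (b%:Z - Delta%:Z) by rewrite -pow2D.
have K_Delta : pow2 K * pow2 (- Delta%:Z) <= pow2 K by rewrite -pow2D ler_pow2 //; lia.
have K_b : 2 * pow2 K <= pow2 (b%:Z - Delta%:Z) by rewrite -pow2S ler_pow2 //; lia.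
have Delta_b : 4 * pow2 (b%:Z - Delta%:Z) <= pow2 b.
  by rewrite (_ : 4 = pow2 2) // -pow2D ler_pow2 //; lia.
have K_b' : 2 * pow2 K <= pow2 b by rewrite -pow2S ler_pow2 //; lia.
move: M'_le M'_ge => /scale M'_le /scale M'_ge.
rewrite mulrBl -mulrA b_Delta -M_tot_shift in M'_le M'_ge.
have M_le_A := M_le_A_tot m0 N C' (G - Delta%:Z).
have A_le_M := A_tot_le_M m0 N C' (G - Delta%:Z).
rewrite lez_pow2 ltz_pow2; apply/andP; split; lra.
Qed.

Lemma floor_div_pow2_bounds (x b r : nat) :
  (Num.floor ((x %/ 2 ^ b)%:R * pow2 (1 - r%:Z)))%:~R <= x%:R * pow2 (1 - r%:Z - b%:Z)
  <= (Num.floor ((x %/ 2 ^ b)%:R * pow2 (1 - r%:Z)))%:~R + 1 + pow2 (1 - r%:Z).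
Proof.
set y := _ * pow2 _; have /andP [floor_le floor_gt] := floor_itv y.
have e : pow2 (1 - r%:Z) = pow2 b * pow2 (1 - r%:Z - b%:Z) by rewrite -pow2D; congr pow2; lia.
have p_ge0 : 0 <= pow2 (1 - r%:Z - b%:Z) by rewrite ltW ?pow2_gt0.
have x_ge : (x %/ 2 ^ b * 2 ^ b)%N%:R * pow2 (1 - r%:Z - b%:Z) <= x%:R * pow2 (1 - r%:Z - b%:Z).
  by rewrite ler_wpM2r // ler_nat leq_trunc_div.
have x_le : x%:R * pow2 (1 - r%:Z - b%:Z) <= ((x %/ 2 ^ b).+1 * 2 ^ b)%N%:R * pow2 (1 - r%:Z - b%:Z).
  by rewrite ler_wpM2r // ler_nat ltnW ?ltn_ceil ?expn_gt0.
rewrite natrM -pow2_nat -mulrA -e -/y in x_ge.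
rewrite natrM -natr1 -pow2_nat -mulrA -e mulrDl mul1r -/y in x_le.
rewrite intrD in floor_gt; apply/andP; split; lra.
Qed.

Lemma sum_pow2_geom_le (n : nat) : \sum_(r < n) pow2 (1 - r%:Z) <= 4.
Proof.
suff -> : \sum_(r < n) pow2 (1 - r%:Z) = 4 - pow2 (2 - n%:Z).
  by rewrite gerBl ltW ?pow2_gt0.
elim: n => [|n IH]; first by rewrite big_ord0 subr0 subrr.
rewrite big_ord_recr /= IH (_ : 2 - n%:Z = (1 - n%:Z) + 1) ?pow2S; last by lia.
by rewrite (_ : 2 - n.+1%:Z = 1 - n%:Z); [lra | lia].
Qed.

(* [Eval] is this normalized mass of the top b+1 levels with each term rounded down. *)
Definition top_mass (b : nat) (C : config) (lam : int) : rat :=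
  \sum_(r < b.+1) (SS C (lam - r%:Z))%:R * pow2 (1 - r%:Z - b%:Z).

Lemma Eval_ge0 b C lam : 0 <= Eval b C lam.
Proof. by apply: sumr_ge0 => r _; rewrite floor_ge0 mulr_ge0 // ltW // pow2_gt0. Qed.

Lemma top_mass_Eval b C lam :
  (Eval b C lam)%:~R <= top_mass b C lam <= (Eval b C lam)%:~R + b.+1%:R + 4.
Proof.
have bounds (r : 'I_b.+1) := floor_div_pow2_bounds (SS C (lam - r%:Z)) b r.
rewrite /Eval rmorph_sum; apply/andP; split.
  by apply: ler_sum => r _; have /andP [] := bounds r.
apply: le_trans (_ : \sum_(r < b.+1) ((Num.floor ((Hr b C lam r)%:R * pow2 (1 - r%:Z)))%:~R
    + 1 + pow2 (1 - r%:Z)) <= _).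
  by apply: ler_sum => r _; have /andP [] := bounds r.
rewrite !big_split /= sumr_const card_ord.
exact: lerD (sum_pow2_geom_le _).
Qed.

Lemma M_tot_top_mass b m0 N C lam (c : int) :
  valid_config b m0 N C -> (forall l, lam < l -> C l = [::]) ->
  pow2 c * top_mass b C lam <= M_tot m0 N C (c + 1 - b%:Z - lam)
    <= pow2 c * (top_mass b C lam + 1).
Proof.
move=> C_valid C_above; set G := c + 1 - b%:Z - lam.
have W_neq0 l : W_lvl C l G != 0 -> C l != [::].
  by apply: contraNneq => Cl; rewrite /W_lvl /SS Cl big_nil mul0r.
pose head l := if lam - b%:Z <= l then W_lvl C l G else 0.
have head_top : \sum_(i < N) head (m0 + i%:Z) = pow2 c * top_mass b C lam.
  rewrite (@sum_levels_window _ m0 N lam b.+1 head).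
  - rewrite /top_mass mulr_sumr; apply: eq_bigr => r _; rewrite /head ifT; last first.
      by have := ltn_ord r; lia.
    by rewrite /W_lvl mulrCA -pow2D; congr (_ * pow2 _); rewrite /G; lia.
  - by move=> l; rewrite /head; case: ifP => // _ /W_neq0 /(valid_level C_valid).
  move=> l; rewrite /head; case: ifP => // l_ge /W_neq0 Cl.
  have l_le : l <= lam by rewrite leNgt; apply: contraNN Cl => /C_above ->.
  by lia.
have W_split i : head (m0 + i%:Z) <= W_lvl C (m0 + i%:Z) G
    <= head (m0 + i%:Z) + pow2 (c - (2 * b)%N%:Z) * (SS C (m0 + i%:Z))%:R.
  rewrite /head; case: ifP => [_ | /negbT l_lt]; first by rewrite lexx lerDl mulr_ge0 // ltW // pow2_gt0.
  rewrite add0r W_lvl_ge0 /W_lvl mulrC ler_wpM2r // ler_pow2 //.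
  by move: l_lt; rewrite /G -ltNge; lia.
have tail : pow2 (c - (2 * b)%N%:Z) * \sum_(i < N) (SS C (m0 + i%:Z))%:R <= pow2 c.
  have -> : pow2 c = pow2 (c - (2 * b)%N%:Z) * pow2 (2 * b)%N%:Z by rewrite -pow2D subrK.
  rewrite -natr_sum ler_wpM2l ?(ltW (pow2_gt0 _)) // pow2_nat ler_nat ltnW //.
  exact: valid_sum_SS_lt C_valid.
rewrite /M_tot -head_top; apply/andP; split; first by apply: ler_sum => i _; case/andP: (W_split i).
rewrite mulrDr mulr1 -head_top; apply: le_trans (lerD (lexx _) tail).
rewrite mulr_sumr -big_split; apply: ler_sum => i _; by case/andP: (W_split i).
Qed.

Lemma trunc_log2_max1_bounds (E : int) : 0 <= E ->
  let t := trunc_log 2 `|Num.max E 1|%N in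
  [/\ E%:~R < pow2 t.+1, 1 <= E -> pow2 t <= E%:~R & E < 1 -> t = 0%N].
Proof.
move=> E_ge0 t; have /andP [t_le t_lt] : (2 ^ t <= `|Num.max E 1|%N < 2 ^ t.+1)%N.
  by apply: trunc_log_bounds; rewrite // absz_gt0 gt_eqF // lt_max ltr01 orbT.
split=> [| E_ge1 | E_lt1]; last by rewrite /t max_r ?ltW.
  have E_lt : E < (2 ^ t.+1)%N%:Z by apply: (@le_lt_trans _ _ `|Num.max E 1|%N%:Z); lia.
  by rewrite pow2_nat; move: E_lt; rewrite -(ltr_int rat).
have t_E : (2 ^ t)%N%:Z <= E by move: t_le; rewrite max_l // -lez_nat abszE ger0_norm.
by rewrite pow2_nat; move: t_E; rewrite -(ler_int rat).
Qed.

Lemma upshift_strongly_good_safe b N K L m0 C lam :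
  (N < 2 ^ K)%N -> (K <= L)%N -> ((b + 10) * 2 ^ L < 2 ^ b)%N ->
  valid_config b m0 N C -> C lam != [::] -> (forall l, lam < l -> C l = [::]) ->
  2%:Z ^+ L <= A_tot m0 N C (L%:Z + 1 - b%:Z - (trunc_log 2 `|Num.max (Eval b C lam) 1|%N)%:Z - lam)
    < 2%:Z ^+ b.
Proof.
move=> N_lt K_le budget C_valid C_lam C_above.
have [E_lt t_E t0] := trunc_log2_max1_bounds (Eval_ge0 b C lam).
set E := Eval b C lam in E_lt t_E t0 *; set t := trunc_log 2 _ in E_lt t_E t0 *.
have -> : L%:Z + 1 - b%:Z - t%:Z - lam = (L%:Z - t%:Z) + 1 - b%:Z - lam by lia.
have /andP [M_ge M_le] := M_tot_top_mass (L%:Z - t%:Z) C_valid C_above.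
set Gu := _ + 1 - _ - _ in M_ge M_le *; set Q := pow2 (L%:Z - t%:Z) in M_ge M_le *.
have Q_gt0 : 0 < Q := pow2_gt0 _.
have /andP [E_top top_E] := top_mass_Eval b C lam; rewrite -/E in E_top top_E.
have A_le_M := A_tot_le_M m0 N C Gu; have M_le_A := M_le_A_tot m0 N C Gu.
rewrite lez_pow2 ltz_pow2; apply/andP; split; last first.
  have Q_le : Q <= pow2 L by apply: ler_pow2; rewrite gerBl.
  have QE : Q * E%:~R < 2 * pow2 L.
    have -> : 2 * pow2 L = Q * pow2 t.+1.
      by rewrite -pow2S -pow2D -addn1 PoszD addrA subrK.
    by rewrite ltr_pM2l.
  have Q_top : Q * top_mass b C lam <= Q * (E%:~R + b.+1%:R + 4) by rewrite ler_pM2l.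
  have Q_b : Q * b.+1%:R <= pow2 L * b.+1%:R by rewrite ler_pM2r.
  have budget' : (b + 10)%N%:R * pow2 L < pow2 b by rewrite !pow2_nat -natrM ltr_nat.
  have N_le := ltr_nat_pow2 N_lt; have K_L : pow2 K <= pow2 L by rewrite ler_pow2 // lez_nat.
  rewrite -natr1 in Q_top Q_b; rewrite natrD in budget'.
  rewrite !(mulrDl, mulrDr) in budget' Q_top Q_b M_le; lra.
case: (lerP 1 E) => [/t_E t_E' | /t0 t_0].
  have -> : pow2 L = Q * pow2 t by rewrite -pow2D subrK.
  apply: le_trans (ler_wpM2l (ltW Q_gt0) t_E') _; apply: le_trans (ler_wpM2l (ltW Q_gt0) E_top) _.
  exact: le_trans M_ge M_le_A.
have b_gt0 : (0 < b)%N by case: (b) budget => //; rewrite expn0 ltnS leqn0 muln_eq0 expn_eq0.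
have -> : Gu = L%:Z - b.-1%:Z - lam by rewrite /Gu t_0; move: b_gt0; clear; lia.
have W_ge := W_lvl_ge L%:Z (valid_SS_ge C_valid C_lam).
have A_lvl_le := A_lvl_le_tot C (L%:Z - b.-1%:Z - lam) (valid_level C_valid C_lam).
rewrite -(ler_int rat) in A_lvl_le.
exact: le_trans W_ge (le_trans (W_le_A_lvl _ _ _) A_lvl_le).
Qed.

Lemma expn_Nat_pow (m n : nat) : expn m n = Nat.pow m n.
Proof. by elim: n => //= n IH; rewrite expnS IH. Qed.

(* The Stdlib real-number modules rebind the nat notations [^] and [%N], hence
   their confinement to this module and the explicit [expn] and [%nat] below. *)
Module Log2Bounds.
Import Rdefinitions Raxioms RIneq Rpower.
Local Open Scope R_scope.

Lemma ltn_mul_exp2_log2R (n m k : nat) : (0 < n)%nat ->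
  log2R (INR n) + INR m < INR k -> (n * expn 2 m < expn 2 k)%nat.
Proof.
move=> /ssrnat.ltP n_gt0 n_lt; apply/ssrnat.ltP/INR_lt.
have ln2_gt0 : 0 < ln 2 := Rlt_trans _ _ _ (Rinv_0_lt_compat 2 Rlt_0_2) ln_lt_2.
have n_pos : 0 < INR n := lt_0_INR _ n_gt0.
rewrite !expn_Nat_pow; change (muln n (Nat.pow 2 m)) with (Nat.mul n (Nat.pow 2 m)).
rewrite mult_INR !pow_INR; change (INR 2) with 2.
have pow2_pos (j : nat) : 0 < Rpow_def.pow 2 j by apply: Rfunctions.pow_lt; apply: Rlt_0_2.
apply: ln_lt_inv; first exact: Rmult_lt_0_compat.
  exact: pow2_pos.
rewrite ln_mult // !ln_pow; try exact: Rlt_0_2.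
have -> : ln (INR n) = ln (INR n) / ln 2 * ln 2 by field; apply: Rgt_not_eq.
rewrite -Rmult_plus_distr_r; exact: Rmult_lt_compat_r.
Qed.

Lemma ltn_exp2_log2R (n k : nat) : (0 < n)%nat -> log2R (INR n) < INR k -> (n < expn 2 k)%nat.
Proof.
move=> n_gt0 n_lt; rewrite -[n]muln1 -(expn0 2); apply: ltn_mul_exp2_log2R => //=.
by rewrite Rplus_0_r.
Qed.

Lemma budget_of_log2R (b L : nat) :
  INR L < INR b - log2R (INR (b + 10)%nat) -> ((b + 10) * expn 2 L < expn 2 b)%nat.
Proof. by move=> L_lt; apply: ltn_mul_exp2_log2R; [rewrite addn_gt0 orbT | Lra.lra]. Qed.
End Log2Bounds.

Theorem mainTheorem10 (b N K Delta R L0 L : nat) (m0 : int) :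
  (0 < b)%N -> (0 < N)%N -> (0 < K)%N -> (0 < Delta)%N -> (0 < R)%N ->
  (0 < L0)%N -> (0 < L)%N ->
  (2 <= Delta)%N ->
  Delta%:Z <= R%:Z - K%:Z ->
  R%:Z - K%:Z < b%:Z - K%:Z - 2 ->
  Rdefinitions.Rlt (log2R (Raxioms.INR N)) (Raxioms.INR K) ->
  (K <= L0)%N -> (L0 <= L)%N ->
  Rdefinitions.Rlt (Raxioms.INR L) (Rdefinitions.Rminus (Raxioms.INR b) (log2R (Raxioms.INR (b + 10)%N))) ->
  (* (1) *)
  (forall (C : config) (lam : int) (s : nat),
      valid_config b m0 N C -> C lam = [:: s] ->
      (forall l, l != lam -> C l = [::]) ->
      let G := L0%:Z + 1 - b%:Z - lam in
      2%:Z ^+ K <= A_tot m0 N C G < 2%:Z ^+ b) /\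
  (* (2) *)
  (forall (C C' : config) (l : int) (s : nat) (G : int),
      valid_config b m0 N C -> valid_config b m0 N C' -> add_sig C C' l s ->
      A_tot m0 N C G < 2%:Z ^+ b ->
      (2%:Z ^+ b <= A_lvl C' l G ->
         let Gd := R%:Z - (trunc_log 2 (SS C' l))%:Z - l in
         2%:Z ^+ K <= A_tot m0 N C' Gd < 2%:Z ^+ b) /\
      (A_lvl C' l G < 2%:Z ^+ b -> 2%:Z ^+ b <= A_tot m0 N C' G ->
         let Gd := G - Delta%:Z in
         2%:Z ^+ K <= A_tot m0 N C' Gd < 2%:Z ^+ b)) /\
  (* (3) *)
  (forall (C C' : config),
      valid_config b m0 N C -> valid_config b m0 N C' -> removed_from C C' ->
      forall G : int, A_tot m0 N C' G <= A_tot m0 N C G /\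
                      (A_tot m0 N C G < 2%:Z ^+ b -> A_tot m0 N C' G < 2%:Z ^+ b)) /\
  (* (4) *)
  (forall (C : config) (lam : int),
      valid_config b m0 N C -> (1 <= zcount m0 N C)%N ->
      in_levels m0 N lam -> C lam != [::] ->
      (forall l, lam < l -> C l = [::]) ->
      let t := trunc_log 2 `|Num.max (Eval b C lam) 1|%N in
      let Gu := L%:Z + 1 - b%:Z - t%:Z - lam in
      2%:Z ^+ L <= A_tot m0 N C Gu < 2%:Z ^+ b).
Proof.
move=> _ N_gt0 _ _ _ _ _ Delta_ge2 Delta_le R_lt log_N K_le L0_le log_L.
have N_lt : (N < 2 ^ K)%N := Log2Bounds.ltn_exp2_log2R N_gt0 log_N.
have budget : ((b + 10) * 2 ^ L < 2 ^ b)%N := Log2Bounds.budget_of_log2R log_L.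
have L_b : (L + 3 < b)%N.
  rewrite -(ltn_exp2l _ _ (ltnSn 1)) expnD mulnC (leq_ltn_trans _ budget) //.
  by rewrite leq_mul2r (leq_trans _ (leq_addl b 10)) ?orbT.
split; [|split; [|split]].
- move=> C lam s C_valid C_lam C_off.
  apply: initial_shift_good_safe C_valid C_lam C_off => //; lia.
- move=> C C' l s G _ C'_valid C_add A_lt; split => [A'_l_ge | A'_l_lt A'_ge].
    by apply: overflow_level_shift_good_safe C'_valid C_add A_lt A'_l_ge => //; lia.
  by apply: (overflow_total_shift_good_safe (R := R)) C'_valid C_add A_lt A'_l_lt A'_ge => //; lia.
- move=> C C' _ _ C_rem G; have A_le := removed_A_tot_le m0 N G C_rem.
  by split=> // /(le_lt_trans A_le).
- move=> C lam C_valid _ _ C_lam C_above.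
  exact: upshift_strongly_good_safe N_lt (leq_trans K_le L0_le) budget C_valid C_lam C_above.
Qed.
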